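(* Let $n\ge 2$ and $k\ge 1$ be integers with $k<n$. Then the cubical set $$\bigcup_{i=1}^k\ \bigcup_{j\in[n],\ j\neq i}\big|[\{i\},[n]\setminus\{j\}]\big|\subseteq\mathbb R^n$$ is acyclic.
   Context: $[n]=\{1,\dots,n\}$, and for $A\subseteq B\subseteq[n]$, $[A,B]=\{C: A\subseteq C\subseteq B\}$. Its geometric realization $|[A,B]|$ is $I_1\times\dots\times I_n\subseteq\mathbb R^n$ with $I_m=\{1\}$ if $m\in A$, $I_m=[0,1]$ if $m\in B\setminus A$, $I_m=\{0\}$ if $m\notin B$. A cubical set (finite union of elementary cubes, i.e. products of intervals $[a,b]$ with $a,b\in\mathbb Z$, $b-a\in\{0,1\}$) $X$ is acyclic if it is non-empty and connected and its cubical homology groups $H_i(X)$ are trivial for all $i\ge1$. *)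

From HB Require Import structures.
From mathcomp Require Import all_boot all_order all_algebra.
From mathcomp Require Import all_classical all_reals topology normedtype.
Set Implicit Arguments. Unset Strict Implicit. Unset Printing Implicit Defensive.
Import Order.TTheory GRing.Theory Num.Theory numFieldTopology.Exports numFieldNormedType.Exports.
Local Open Scope ring_scope.
Local Open Scope classical_set_scope.

(* R^n is represented by row vectors 'rV[R]_n, with the product topology;
   coordinate m (0-indexed, m : 'I_n) of x is x ord0 m.
   The paper's [n] = {1,...,n} is represented by 'I_n = {0,...,n-1}. *)

Definition bool_interval_real (R : realType) (n : nat) (A B : {set 'I_n})
  : set 'rV[R]_n :=
  [set x | forall m : 'I_n,
     (m \in A -> x ord0 m = 1) /\
     (m \in B -> m \notin A -> 0 <= x ord0 m <= 1) /\
     (m \notin B -> x ord0 m = 0)].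

(* Elementary cubes in R^n: a product of intervals I_m = [a_m, a_m + e_m]
   with a_m an integer and e_m in {0,1}; encoded by (a_m, e_m). *)
Definition cube (n : nat) := {ffun 'I_n -> int * bool}.

Definition cube_real (R : realType) (n : nat) (Q : cube n) : set 'rV[R]_n :=
  [set x | forall m : 'I_n,
     ((Q m).1)%:~R <= x ord0 m <= ((Q m).1)%:~R + ((Q m).2)%:R].

Definition cube_dim (n : nat) (Q : cube n) : nat := #|[set m | (Q m).2]|.

Definition chain (n : nat) := cube n -> int.

Definition is_chain (R : realType) (n : nat) (X : set 'rV[R]_n) (k : nat)
  (c : chain n) : Prop :=
  (exists s : seq (cube n), forall Q, c Q != 0 -> Q \in s) /\
  (forall Q, c Q != 0 -> cube_dim Q = k /\ cube_real (R:=R) Q `<=` X).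

Definition cube_set (n : nat) (P : cube n) (m : 'I_n) (v : int * bool) : cube n :=
  [ffun l => if l == m then v else P l].

Definition nondeg_before (n : nat) (P : cube n) (m : 'I_n) : nat :=
  #|[set l : 'I_n | (l < m)%N && (P l).2]|.

(* Cubical boundary (Kaczynski–Mischaikow–Mrozek):
     d(I_1 x ... x I_n) = sum_{m, I_m = [a,a+1]} (-1)^(#nondeg before m)
                          (I_1 x ..x [a+1] x.. I_n  -  I_1 x ..x [a] x.. I_n).
   Written through coefficients: the coefficient of an elementary cube P in dc
   collects the two cofaces of P in each degenerate coordinate m = [a,a]:
   [a-1,a] (P is its upper face, sign +) and [a,a+1] (P is its lower face,
   sign -). *)
Definition bdry (n : nat) (c : chain n) : chain n := fun P =>
  \sum_(m < n | ~~ (P m).2)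
     (-1) ^+ (nondeg_before P m) *
     (c (cube_set P m (((P m).1 - 1)%R, true)) - c (cube_set P m ((P m).1, true))).

Definition homology_trivial (R : realType) (n : nat) (X : set 'rV[R]_n) (k : nat)
  : Prop :=
  forall c : chain n, is_chain X k c -> bdry c = (fun _ => 0) ->
    exists d : chain n, is_chain X k.+1 d /\ bdry d = c.

Definition acyclic (R : realType) (n : nat) (X : set 'rV[R]_n) : Prop :=
  X !=set0 /\ connected X /\ forall k : nat, (1 <= k)%N -> homology_trivial X k.

(* The cubical set of the statement:
   union over i in {1..k} and j in [n], j <> i, of |[{i}, [n] \ {j}]|.
   (0-indexed: i ranges over 'I_n with i < k.) *)
Definition lemma3_set (R : realType) (n k : nat) : set 'rV[R]_n :=
  \bigcup_(i in [set i : 'I_n | (i < k)%N])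
    \bigcup_(j in [set j : 'I_n | j != i])
      bool_interval_real (R:=R) [set i] (~: [set j]).

From HB Require Import structures.
From mathcomp Require Import all_boot all_order all_algebra.
From mathcomp Require Import all_classical all_reals topology normedtype.
From mathcomp Require Import zify ring lra.
Set Implicit Arguments. Unset Strict Implicit. Unset Printing Implicit Defensive.
Import Order.TTheory GRing.Theory Num.Theory numFieldTopology.Exports numFieldNormedType.Exports.
Local Open Scope ring_scope.
Local Open Scope classical_set_scope.

(* The elementary cubes of X are the products of factors [0], [1] and [0,1]
   with a factor [1] at some index i < k and a factor [0] somewhere.  Fix an
   index e >= k and let Y be the subcomplex of cubes of X whose e-th factor
   is [0].  Projecting one coordinate x_m onto a vertex t is chain homotopic
   to the identity through a prism operator, so every cycle z equals its
   projection plus the boundary of its prism.  Projecting x_e onto 0 maps X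
   into Y, because the factor [1] sits at an index i < k <= e, and its prisms
   stay in X.  Inside Y, projecting the remaining coordinates onto 1 one after
   another keeps the cubes in Y, again with prisms in X.  Once every
   coordinate is projected only vertices are left, so every cycle of
   positive dimension of X bounds in X. *)

Section CubicalChains.
Variable n : nat.
Implicit Types (P Q : cube n) (c d : chain n) (l m : 'I_n) (t : bool) (v w : int * bool).

Lemma cube_setE P m v l : cube_set P m v l = if l == m then v else P l.
Proof. by rewrite ffunE. Qed.

Lemma cube_set_at P m v : cube_set P m v m = v.
Proof. by rewrite cube_setE eqxx. Qed.

Lemma cube_set_off P m v l : l != m -> cube_set P m v l = P l.
Proof. by rewrite cube_setE => /negbTE ->. Qed.

Lemma cube_setC P l m v w : l != m ->
  cube_set (cube_set P l v) m w = cube_set (cube_set P m w) l v.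
Proof.
move=> lm; apply/ffunP => x; rewrite !cube_setE.
by case: (eqVneq x m) => [->|//]; rewrite eq_sym (negbTE lm).
Qed.

Lemma cube_set_set P m v w : cube_set (cube_set P m v) m w = cube_set P m w.
Proof. by apply/ffunP => x; rewrite !cube_setE; case: eqP. Qed.

Lemma cube_set_self P m : cube_set P m (P m) = P.
Proof. by apply/ffunP => x; rewrite cube_setE; case: eqP => [->|]. Qed.

Lemma card_set_sum (p : pred 'I_n) : #|[set l | p l]%classic| = (\sum_(l < n) p l)%N.
Proof.
rewrite mem_setE -sum1_card big_mkcond /=.
by apply: eq_bigr => l _; rewrite unfold_in; case: (p l).
Qed.

Lemma sum_cube_set (p : 'I_n -> int * bool -> bool) P m v :
  (\sum_(l < n) p l (cube_set P m v l) + p m (P m) =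
   \sum_(l < n) p l (P l) + p m v)%N.
Proof.
rewrite (bigD1 m) //= [in RHS](bigD1 m) //= cube_set_at.
under eq_bigr => l lm do rewrite cube_set_off //.
lia.
Qed.

Lemma cube_dim_set P m v :
  (cube_dim (cube_set P m v) + (P m).2 = cube_dim P + v.2)%N.
Proof. by rewrite /cube_dim !card_set_sum (sum_cube_set (fun _ w => w.2)). Qed.

Definition face_sign P m : int := (-1) ^+ nondeg_before P m.

Lemma face_sign_set P l v m : face_sign (cube_set P l v) m =
  face_sign P m * (-1) ^+ ((l < m)%N && ((P l).2 != v.2)).
Proof.
have := congr1 odd (sum_cube_set (fun l' w => (l' < m)%N && w.2) P l v).
rewrite /face_sign /nondeg_before !card_set_sum !oddD !oddb -signr_odd.
rewrite -[X in _ = X * _]signr_odd -signr_addb => E; congr (_ ^+ nat_of_bool _).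
by move: E; case: (l < m)%N; case: (P l).2; case: v.2; case: odd; case: odd.
Qed.

Lemma face_sign_set_at P m v : face_sign (cube_set P m v) m = face_sign P m.
Proof. by rewrite face_sign_set ltnn mulr1. Qed.

Lemma face_sign_sqr P m : face_sign P m * face_sign P m = 1.
Proof. by rewrite -expr2 sqrr_sign. Qed.

Lemma sign_ltnC l m : l != m -> (-1) ^+ (m < l)%N = - (-1) ^+ (l < m)%N :> int.
Proof.
move=> lm; case: ltngtP => [||/val_inj eq_lm]; rewrite ?expr0 ?expr1 ?opprK //.
by rewrite eq_lm eqxx in lm.
Qed.

Lemma bdryE c P : bdry c P = \sum_(l < n | ~~ (P l).2) face_sign P l *
  (c (cube_set P l ((P l).1 - 1, true)) - c (cube_set P l ((P l).1, true))).
Proof. by []. Qed.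

Lemma eq_bdry c d : c =1 d -> bdry c =1 bdry d.
Proof. by move=> cd P; rewrite !bdryE; apply: eq_bigr => l _; rewrite !cd. Qed.

Lemma bdry0 : bdry (fun _ : cube n => 0) =1 (fun _ => 0).
Proof. by move=> P; rewrite bdryE big1 // => l _; rewrite subrr mulr0. Qed.

Lemma bdryD c d P : bdry (fun Q => c Q + d Q) P = bdry c P + bdry d P.
Proof. by rewrite !bdryE -big_split; apply: eq_bigr => l _ /=; ring. Qed.

Lemma bdryB c d P : bdry (fun Q => c Q - d Q) P = bdry c P - bdry d P.
Proof. by rewrite !bdryE -sumrB; apply: eq_bigr => l _; ring. Qed.

Lemma sum_antisym (p : pred 'I_n) (F : 'I_n -> 'I_n -> int) :
  (forall l l', l != l' -> F l l' = - F l' l) ->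
  \sum_(l < n | p l) \sum_(l' < n | p l' && (l' != l)) F l l' = 0.
Proof.
move=> FN; set T := LHS; have : T = - T.
  rewrite {1}/T (exchange_big_dep p) /=; last by move=> l l' _ /andP[].
  rewrite -sumrN; apply: eq_bigr => l pl; rewrite -sumrN.
  apply: eq_big => [l'|l' /andP[_ /andP[_ ll']]]; first by rewrite pl /= eq_sym.
  by rewrite FN // eq_sym.
by move/eqP; rewrite -addr_eq0 -mulr2n mulrn_eq0 => /eqP.
Qed.

Lemma bdry_cube_set_edge c P l x : ~~ (P l).2 ->
  bdry c (cube_set P l (x, true)) =
  \sum_(l' < n | ~~ (P l').2 && (l' != l)) face_sign P l' * (-1) ^+ (l < l')%N *
    (c (cube_set (cube_set P l (x, true)) l' ((P l').1 - 1, true))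
   - c (cube_set (cube_set P l (x, true)) l' ((P l').1, true))).
Proof.
move=> Pl; rewrite bdryE; apply: eq_big => [l'|l' Pl'].
  by case: (eqVneq l' l) => [->|l'l] /=; rewrite ?cube_set_at ?cube_set_off ?andbF ?andbT.
have l'l : l' != l by apply: contraNneq Pl' => ->; rewrite cube_set_at.
by rewrite cube_set_off // face_sign_set (negbTE Pl) andbT.
Qed.

Lemma bdry_bdry c : bdry (bdry c) =1 (fun _ => 0).
Proof.
move=> P; rewrite bdryE.
under eq_bigr => l Pl do rewrite !bdry_cube_set_edge // -sumrB mulr_sumr.
apply: (@sum_antisym (fun l => ~~ (P l).2)) => l l' ll'.
rewrite !(cube_setC _ _ _ ll') (sign_ltnC ll'); ring.
Qed.

Definition vtx (b : bool) : int * bool := (if b then 1 else 0, false).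

Definition unit_factor v := [|| v == (0, false), v == (1, false) | v == (0, true)].

Definition unit_supported m c := forall P, ~~ unit_factor (P m) -> c P = 0.

(* On chains supported on cubes whose m-th factor lies in [0,1], [push t m] is
   the chain map induced by the projection x_m |-> t, and [prism t m] is a
   chain homotopy from the identity to it. *)
Definition prism t m c : chain n := fun P =>
  if P m == (0, true) then (-1) ^+ t * (face_sign P m * c (cube_set P m (vtx (~~ t))))
  else 0.

Definition push t m c : chain n := fun P =>
  if P m == vtx t then c P + c (cube_set P m (vtx (~~ t))) else 0.

Lemma prism_off t m c P : P m != (0, true) -> prism t m c P = 0.
Proof. by rewrite /prism => /negbTE ->. Qed.

Lemma prism_edge t m c P : P m = (0, true) ->
  prism t m c P = (-1) ^+ t * (face_sign P m * c (cube_set P m (vtx (~~ t)))).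
Proof. by rewrite /prism => ->; rewrite eqxx. Qed.

Lemma face_signK P m x : face_sign P m * (face_sign P m * x) = x.
Proof. by rewrite mulrA face_sign_sqr mul1r. Qed.

Lemma bdry_prism_edge t m c P : P m = (0, true) ->
  bdry (prism t m c) P = - ((-1) ^+ t * (face_sign P m *
    \sum_(l < n | ~~ (P l).2) face_sign (cube_set P m (vtx (~~ t))) l *
      (c (cube_set (cube_set P m (vtx (~~ t))) l ((P l).1 - 1, true))
     - c (cube_set (cube_set P m (vtx (~~ t))) l ((P l).1, true))))).
Proof.
move=> Pm; rewrite bdryE mulrA big_distrr -sumrN; apply: eq_bigr => l Pl.
have lm : l != m by apply: contraNneq Pl => ->; rewrite Pm.
have ml : m != l by rewrite eq_sym.
rewrite /= !prism_edge ?cube_set_off // !face_sign_set Pm (negbTE Pl) /= !andbT.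
by rewrite !(cube_setC _ _ _ lm) (sign_ltnC lm); ring.
Qed.

Lemma bdry_cube_set_vertex c P m v : (P m).2 -> ~~ v.2 ->
  bdry c (cube_set P m v) = face_sign P m *
    (c (cube_set P m (v.1 - 1, true)) - c (cube_set P m (v.1, true))) +
  \sum_(l < n | ~~ (P l).2) face_sign (cube_set P m v) l *
    (c (cube_set (cube_set P m v) l ((P l).1 - 1, true))
   - c (cube_set (cube_set P m v) l ((P l).1, true))).
Proof.
move=> Pm v2; rewrite bdryE (bigD1 m) /= ?cube_set_at //.
rewrite face_sign_set_at !cube_set_set; congr (_ + _).
apply: eq_big => [l|l /andP[_ lm]]; last by rewrite cube_set_off.
by case: (eqVneq l m) => [->|lm]; rewrite ?Pm ?andbF // cube_set_off ?andbT.
Qed.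

Lemma prism_homotopy_edge t m c P : unit_supported m c -> P m = (0, true) ->
  bdry (prism t m c) P + prism t m (bdry c) P = c P.
Proof.
move=> cU Pm; rewrite bdry_prism_edge // prism_edge // bdry_cube_set_vertex ?Pm //.
rewrite mulrDr mulrDr addrC addrK face_signK.
have PE : cube_set P m (0, true) = P by rewrite -Pm cube_set_self.
case: t => /=.
- by rewrite [c (cube_set P m (_ - 1, true))]cU ?cube_set_at // sub0r PE mulN1r opprK.
- by rewrite [c (cube_set P m (1, _))]cU ?cube_set_at // subr0 PE mul1r.
Qed.

Lemma prism_homotopy_vertex t m c P a : unit_supported m c -> P m = (a, false) ->
  bdry (prism t m c) P = c P - push t m c P.
Proof.
move=> cU Pm; have PE : cube_set P m (a, false) = P by rewrite -Pm cube_set_self.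
rewrite bdryE (bigD1 m) ?Pm //= big1 ?addr0 => [|l /andP[_ lm]]; last first.
  by rewrite !prism_off ?subrr ?mulr0 // cube_set_off 1?eq_sym // Pm xpair_eqE andbF.
rewrite /push Pm /vtx.
have [a0|a0] := eqVneq a 0; [subst a|have [a1|a1] := eqVneq a 1; [subst a|]].
- rewrite prism_off ?cube_set_at // prism_edge ?cube_set_at // cube_set_set.
  rewrite face_sign_set_at sub0r mulrN mulrCA face_signK.
  by case: t PE => /= PE; rewrite /vtx /= ?PE ?mulN1r ?opprK ?mul1r ?subr0 // opprD addNKr.
- rewrite prism_edge ?cube_set_at ?subrr // prism_off ?cube_set_at //.
  rewrite cube_set_set face_sign_set_at subr0 mulrCA face_signK.
  by case: t PE => /= PE; rewrite /vtx /= ?PE ?mulN1r ?mul1r ?subr0 // opprD addNKr.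
- rewrite !prism_off ?cube_set_at ?xpair_eqE ?subr_eq0 ?andbT // subrr mulr0.
  rewrite cU ?Pm /unit_factor ?xpair_eqE ?(negbTE a0) ?(negbTE a1) //.
  by case: t; rewrite /= ?(negbTE a0) ?(negbTE a1) subrr.
Qed.

Lemma prism_homotopy t m c P : unit_supported m c ->
  bdry (prism t m c) P + prism t m (bdry c) P = c P - push t m c P.
Proof.
move=> cU; have push0 : (P m).2 -> push t m c P = 0.
  by rewrite /push; case: (P m) => a [] //= _; rewrite xpair_eqE andbF.
case Pm: (P m) => [a []]; last first.
  by rewrite prism_off ?Pm ?xpair_eqE ?andbF // addr0 (prism_homotopy_vertex _ cU Pm).
rewrite push0 ?Pm // subr0; have [a0|a0] := eqVneq a 0.
  by subst a; exact: prism_homotopy_edge.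
have Pm0 : P m != (0, true) by rewrite Pm xpair_eqE (negbTE a0).
rewrite prism_off // addr0 cU ?Pm /unit_factor ?xpair_eqE ?(negbTE a0) ?andbF //.
rewrite bdryE big1 // => l Pl; have ml : m != l by apply: contraNneq Pl => <-; rewrite Pm.
by rewrite !prism_off ?cube_set_off ?subrr ?mulr0.
Qed.

Lemma push_bdry t m c : unit_supported m c -> bdry c = (fun _ => 0) ->
  push t m c =1 (fun P => c P - bdry (prism t m c) P).
Proof.
move=> cU c_cycle P; have := prism_homotopy t P cU.
have -> : prism t m (bdry c) P = 0 by rewrite /prism c_cycle /= mulr0 mulr0 if_same.
by rewrite addr0 => ->; rewrite opprB addrC subrK.
Qed.

Lemma push_cycle t m c : unit_supported m c -> bdry c = (fun _ => 0) ->
  bdry (push t m c) = (fun _ => 0).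
Proof.
move=> cU c_cycle; apply/funext => P.
by rewrite (eq_bdry (push_bdry t cU c_cycle)) bdryB c_cycle bdry_bdry subrr.
Qed.

Definition chain_on (S : set (cube n)) (k : nat) c : Prop :=
  (exists s : seq (cube n), forall Q, c Q != 0 -> Q \in s) /\
  (forall Q, c Q != 0 -> cube_dim Q = k /\ S Q).

Definition cycles_bound (S T : set (cube n)) (k : nat) : Prop :=
  forall c, chain_on S k c -> bdry c = (fun _ => 0) ->
    exists d, chain_on T k.+1 d /\ bdry d = c.

Lemma chain_onS S1 S2 k c : S1 `<=` S2 -> chain_on S1 k c -> chain_on S2 k c.
Proof. by move=> S12 [supp dimS]; split=> // Q /dimS[? /S12]. Qed.

Lemma cycles_boundS S1 S2 T1 T2 k : S1 `<=` S2 -> T2 `<=` T1 ->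
  cycles_bound S2 T2 k -> cycles_bound S1 T1 k.
Proof.
move=> S12 T21 bound c /(chain_onS S12) cS2 /(bound _ cS2)[d [dT2 <-]].
by exists d; split=> //; apply: chain_onS dT2.
Qed.

Lemma chain_onD S k c d :
  chain_on S k c -> chain_on S k d -> chain_on S k (fun P => c P + d P).
Proof.
move=> [[s cs] cS] [[s' ds] dS]; split.
  exists (s ++ s') => Q; rewrite mem_cat.
  by case: (eqVneq (c Q) 0) => [->|/cs -> //]; rewrite add0r => /ds ->; rewrite orbT.
by move=> Q; case: (eqVneq (c Q) 0) => [->|/cS //]; rewrite add0r => /dS.
Qed.

Lemma chain_on_prism S T k t m c : chain_on S k c ->
  (forall P, P m = (0, true) -> S (cube_set P m (vtx (~~ t))) -> T P) ->
  chain_on T k.+1 (prism t m c).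
Proof.
move=> [[s cs] cS] ST.
have prism_supp Q : prism t m c Q != 0 ->
    Q m = (0, true) /\ c (cube_set Q m (vtx (~~ t))) != 0.
  rewrite /prism; case: (Q m =P (0, true)) => [-> |_]; last by rewrite eqxx.
  by rewrite !mulf_eq0 !negb_or => /and3P[_ _].
split.
  exists (map (fun Q => cube_set Q m (0, true)) s) => Q /prism_supp[Qm cQ].
  apply/mapP; exists (cube_set Q m (vtx (~~ t))); first exact: cs.
  by rewrite cube_set_set -Qm cube_set_self.
move=> Q /prism_supp[Qm /cS[dimQ SQ]]; split; last exact: ST.
by have := cube_dim_set Q m (vtx (~~ t)); rewrite Qm dimQ addn0 addn1.
Qed.

Lemma chain_on_push S T k t m c : chain_on S k c ->
  (forall P, P m = vtx t -> S P \/ S (cube_set P m (vtx (~~ t))) -> T P) ->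
  chain_on T k (push t m c).
Proof.
move=> [[s cs] cS] ST.
have push_supp Q : push t m c Q != 0 ->
    Q m = vtx t /\ (c Q != 0 \/ c (cube_set Q m (vtx (~~ t))) != 0).
  rewrite /push; case: (Q m =P vtx t) => [-> |_]; last by rewrite eqxx.
  by case: (eqVneq (c Q) 0) => [->|cQ]; rewrite ?add0r => ?; split=> //; [right | left].
split.
  exists (s ++ map (fun Q => cube_set Q m (vtx t)) s) => Q /push_supp[Qm [/cs cQ|cQ]].
    by rewrite mem_cat cQ.
  rewrite mem_cat; apply/orP; right; apply/mapP; exists (cube_set Q m (vtx (~~ t))).
    exact: cs.
  by rewrite cube_set_set -Qm cube_set_self.
move=> Q /push_supp[Qm [/cS[dimQ SQ]|/cS[dimQ SQ]]]; split; try by [|apply: ST; auto].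
by have := cube_dim_set Q m (vtx (~~ t)); rewrite Qm dimQ /= !addn0 => ->.
Qed.

Lemma cycles_bound_collapse S S' T k t m :
  (forall Q, S Q -> unit_factor (Q m)) ->
  (forall P, P m = vtx t -> S P \/ S (cube_set P m (vtx (~~ t))) -> S' P) ->
  (forall P, P m = (0, true) -> S (cube_set P m (vtx (~~ t))) -> T P) ->
  cycles_bound S' T k -> cycles_bound S T k.
Proof.
move=> SU SS' ST bound c cS c_cycle.
have cU : unit_supported m c.
  by move=> P; apply: contraNeq => /(proj2 cS P)[_ /SU].
have [d [dT bd]] := bound _ (chain_on_push cS SS') (push_cycle t cU c_cycle).
exists (fun P => d P + prism t m c P); split.
  by apply: chain_onD dT (chain_on_prism cS ST).
apply/funext => P; rewrite bdryD bd push_bdry //; exact: subrK.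
Qed.

Lemma cycles_bound_dim0 S T k : (0 < k)%N -> (forall Q, S Q -> cube_dim Q = 0%N) ->
  cycles_bound S T k.
Proof.
move=> k_gt0 dimS c [_ cS] _; have c0 : c = (fun _ => 0).
  apply/funext => Q; apply/eqP; apply: contraT => /cS[dimQ /dimS].
  by rewrite dimQ => k0; rewrite k0 in k_gt0.
exists (fun _ => 0); split; last by rewrite c0; apply/funext => P; exact: bdry0.
by split=> [|Q]; [exists [::] => Q|]; rewrite eqxx.
Qed.

Lemma cube_dim_eq0 P : (forall l, ~~ (P l).2) -> cube_dim P = 0%N.
Proof.
by move=> Pdeg; rewrite /cube_dim card_set_sum big1 // => l _; rewrite (negbTE (Pdeg l)).
Qed.

End CubicalChains.

Section Collapse.
Variables (n k : nat) (e : 'I_n).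
Hypothesis k_le_e : (k <= e)%N.
Implicit Types (P Q : cube n) (l m : 'I_n).

Definition unit_cube Q := [forall m, unit_factor (Q m)].
Definition has_one Q := [exists i : 'I_n, (i < k)%N && (Q i == (1, false))].
Definition Xcube Q := [&& unit_cube Q, has_one Q & [exists j, Q j == (0, false)]].
Definition Ycube Q := [&& unit_cube Q, has_one Q & Q e == (0, false)].
Definition degenerate_below (j : nat) Q := [forall l : 'I_n, (l < j)%N ==> ~~ (Q l).2].

Lemma unit_cube_set Q m v :
  unit_factor (Q m) -> unit_cube (cube_set Q m v) -> unit_cube Q.
Proof.
rewrite /unit_cube => Qm /forallP Qv; apply/forallP => l.
by case: (eqVneq l m) => [->//|lm]; have := Qv l; rewrite cube_set_off.
Qed.

Lemma has_one_set Q m v : (Q m == (1, false)) || (v != (1, false)) ->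
  has_one (cube_set Q m v) -> has_one Q.
Proof.
rewrite /has_one => Qv /existsP[i /andP[ik Qvi]]; apply/existsP; exists i.
rewrite ik; case: (eqVneq i m) Qvi => [->|im]; rewrite ?cube_set_at ?cube_set_off //.
by move=> /eqP vE; rewrite vE eqxx orbF in Qv.
Qed.

Lemma has_one_set_e Q v : has_one (cube_set Q e v) = has_one Q.
Proof.
apply: eq_existsb => i; case: (ltnP i k) => //= ik.
by rewrite cube_set_off //; apply: contraTneq ik => ->; rewrite -leqNgt.
Qed.

Lemma degenerate_below_set j Q m v : (j <= m)%N ->
  degenerate_below j (cube_set Q m v) = degenerate_below j Q.
Proof.
move=> jm; apply: eq_forallb => l; case: (ltnP l j) => //= lj.
by rewrite cube_set_off //; apply: contraTneq lj => ->; rewrite -leqNgt.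
Qed.

Lemma degenerate_belowS Q m : ~~ (Q m).2 ->
  degenerate_below m.+1 Q = degenerate_below m Q.
Proof.
move=> Qm; apply: eq_forallb => l; rewrite ltnS leq_eqVlt.
by case: eqP => [/val_inj ->|_]; rewrite ?Qm ?implybT.
Qed.

Lemma Ycube_Xcube Q : Ycube Q -> Xcube Q.
Proof. by case/and3P=> QU Q1 Qe; rewrite /Xcube QU Q1; apply/existsP; exists e. Qed.

Lemma Ycube_set Q m v : m != e -> unit_factor (Q m) ->
  (Q m == (1, false)) || (v != (1, false)) -> Ycube (cube_set Q m v) -> Ycube Q.
Proof.
move=> me Qm Qv /and3P[/(unit_cube_set Qm) QU /(has_one_set Qv) Q1].
by rewrite /Ycube QU Q1 cube_set_off // eq_sym.
Qed.

Lemma cycles_bound_Ycube_step d m :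
  cycles_bound [set Q | Ycube Q && degenerate_below m.+1 Q] [set Q | Xcube Q] d ->
  cycles_bound [set Q | Ycube Q && degenerate_below m Q] [set Q | Xcube Q] d.
Proof.
have [-> | me] := eqVneq m e.
  apply: cycles_boundS => // Q /andP[YQ]; rewrite /= YQ degenerate_belowS //.
  by case/and3P: YQ => _ _ /eqP ->.
apply: (cycles_bound_collapse (t := true) (m := m)).
- by move=> Q /andP[/and3P[/forallP QU _ _] _].
- move=> P Pm SP; have [YP dP] : Ycube P /\ degenerate_below m P.
    case: SP => /andP[// YP]; rewrite degenerate_below_set // => dP; split=> //.
    by apply: Ycube_set YP; rewrite // Pm.
  by rewrite /= YP degenerate_belowS ?Pm.
- move=> P Pm /andP[YP _]; apply: Ycube_Xcube; apply: Ycube_set YP; rewrite // Pm //.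
Qed.

Lemma cycles_bound_Ycube d : (0 < d)%N ->
  cycles_bound [set Q | Ycube Q] [set Q | Xcube Q] d.
Proof.
move=> d_gt0.
suff bound_below r j : (r + j = n)%N ->
    cycles_bound [set Q | Ycube Q && degenerate_below j Q] [set Q | Xcube Q] d.
  apply: (cycles_boundS _ _ (bound_below n 0%N (addn0 n))) => // Q /= ->.
  exact/forallP.
elim: r j => [|r IH] j.
  rewrite add0n => ->; apply: cycles_bound_dim0 => // Q /andP[_ /forallP dQ].
  by apply: cube_dim_eq0 => l; apply: (implyP (dQ l)).
move=> rj; have jn : (j < n)%N by rewrite -rj addSn ltnS leq_addl.
by apply: (@cycles_bound_Ycube_step _ (Ordinal jn)); apply: IH; rewrite -addSnnS.
Qed.

Lemma cycles_bound_Xcube d : (0 < d)%N ->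
  cycles_bound [set Q | Xcube Q] [set Q | Xcube Q] d.
Proof.
move=> d_gt0.
apply: (cycles_bound_collapse (S' := [set Q | Ycube Q]) (t := false) (m := e)).
- by move=> Q /and3P[/forallP QU _ _].
- move=> P Pe SP; have [PU P1] : unit_cube P /\ has_one P.
    case: SP => /and3P[QU Q1 _]; first by [].
    by rewrite -(has_one_set_e P (1, false)) (unit_cube_set _ QU) ?Pe.
  by rewrite /= /Ycube PU P1 Pe.
- move=> P Pe /and3P[QU Q1 /existsP[j Qj]].
  rewrite /= /Xcube (unit_cube_set _ QU) ?Pe // -(has_one_set_e P (1, false)) Q1.
  apply/existsP; exists j.
  by case: (eqVneq j e) Qj => [->|je]; rewrite ?cube_set_at ?cube_set_off.
- exact: cycles_bound_Ycube.
Qed.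

End Collapse.

Section Geometry.
Variables (R : realType) (n : nat).
Implicit Types (a b x : 'rV[R]_n) (i j m : 'I_n).

Definition line_seg a b : set 'rV[R]_n := (fun t : R => a + t *: (b - a)) @` `[0, 1].

Lemma line_seg_connected a b : connected (line_seg a b).
Proof.
apply: connected_continuous_connected; first exact: segment_connected.
apply: continuous_subspaceT => t.
have -> : (fun t : R => a + t *: (b - a)) = cst a + (fun t => t *: (b - a)) by [].
by apply: continuousD; [exact: cst_continuous | exact: continuousZr_tmp].
Qed.

Lemma line_seg_start a b : line_seg a b a.
Proof. by exists 0; [rewrite /= in_itv /= lexx ler01 | rewrite scale0r addr0]. Qed.

Lemma line_seg_end a b : line_seg a b b.
Proof. by exists 1; [rewrite /= in_itv /= lexx ler01 | rewrite scale1r addrC subrK]. Qed.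

Definition box i j := bool_interval_real (R := R) [set i] (~: [set j]).

Lemma boxP i j x : j != i ->
  box i j x <-> [/\ x ord0 i = 1, x ord0 j = 0 & forall m, 0 <= x ord0 m <= 1].
Proof.
move=> ji; split=> [xb | [xi xj x01] m].
  have xi : x ord0 i = 1 by apply: (xb i).1; rewrite finset.in_set1.
  have xj : x ord0 j = 0 by apply: (xb j).2.2; rewrite finset.in_setC finset.in_set1 negbK.
  split=> // m; have [->|mi] := eqVneq m i; first by rewrite xi ler01 lexx.
  have [->|mj] := eqVneq m j; first by rewrite xj lexx ler01.
  by apply: (xb m).2.1; rewrite ?finset.in_setC finset.in_set1 ?mj ?mi.
split; [|split].
- by rewrite finset.in_set1 => /eqP ->.
- by move=> _ _; exact: x01.
- by rewrite finset.in_setC finset.in_set1 negbK => /eqP ->.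
Qed.

Lemma line_seg_sub_box i j a b : j != i -> box i j a -> box i j b ->
  line_seg a b `<=` box i j.
Proof.
move=> ji /(boxP _ ji)[ai aj a01] /(boxP _ ji)[bi bj b01] x [t].
rewrite /= in_itv /= => /andP[t0 t1] <-; apply/boxP => //.
rewrite !mxE ai bi aj bj !subrr !mulr0 !addr0; split=> // m.
by rewrite !mxE; have /andP[? ?] := a01 m; have /andP[? ?] := b01 m; apply/andP; split; nra.
Qed.

End Geometry.

Lemma homology_trivial_cycles_bound (R : realType) n (X : set 'rV[R]_n) k :
  cycles_bound [set Q | cube_real Q `<=` X] [set Q | cube_real Q `<=` X] k ->
  homology_trivial X k.
Proof. by []. Qed.

Section Lemma3Set.
Variables (R : realType) (n k : nat) (e : 'I_n).
Hypotheses (k_gt0 : (0 < k)%N) (k_le_e : (k <= e)%N).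
Implicit Types (i j m : 'I_n).

Definition unit_vec i : 'rV[R]_n := \row_m (if m == i then 1 else 0).
Definition ones_below : 'rV[R]_n := \row_m (if (m < k)%N then 1 else 0).

Lemma unit_vec_box i j : j != i -> box i j (unit_vec i).
Proof.
move=> ji; apply/boxP; rewrite // !mxE eqxx (negbTE ji); split=> // m.
by rewrite mxE; case: (m == i); rewrite lexx ler01.
Qed.

Lemma e_neq_lt i : (i < k)%N -> e != i.
Proof. by move=> ik; apply: contraTneq ik => <-; rewrite -leqNgt. Qed.

Lemma ones_below_box i : (i < k)%N -> box i e ones_below.
Proof.
move=> ik; apply/boxP; first exact: e_neq_lt.
rewrite !mxE ik ltnNge k_le_e; split=> // m.
by rewrite mxE; case: (m < k)%N; rewrite lexx ler01.
Qed.

Lemma lemma3_set_nonempty : lemma3_set (R := R) (n := n) k !=set0.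
Proof.
pose i0 : 'I_n := Ordinal (leq_trans k_gt0 (leq_trans k_le_e (ltnW (ltn_ord e)))).
by exists ones_below, i0 => //; exists e; [exact: e_neq_lt | exact: ones_below_box].
Qed.

(* Every box is convex: a point of [box i j] is joined to [unit_vec i] inside
   [box i j], and [unit_vec i] to [ones_below] inside [box i e]. *)
Lemma lemma3_set_connected : connected (lemma3_set (R := R) (n := n) k).
Proof.
have -> : lemma3_set (R := R) (n := n) k =
    \bigcup_(p in [set p : 'I_n * 'I_n * 'rV[R]_n |
               [/\ (p.1.1 < k)%N, p.1.2 != p.1.1 & box p.1.1 p.1.2 p.2]])
      (line_seg ones_below (unit_vec p.1.1) `|` line_seg (unit_vec p.1.1) p.2).
  apply/seteqP; split=> [x [i /= ik [j /= ji xb]]|x [[[i j] y] /= [ik ji yb]] []].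
  - by exists (i, j, x) => //=; right; exact: line_seg_end.
  - move=> /line_seg_sub_box xb; exists i => //; exists e; first exact: e_neq_lt.
    by apply: xb; [exact: e_neq_lt | exact: ones_below_box | exact: unit_vec_box (e_neq_lt ik)].
  - move=> /line_seg_sub_box xb; exists i => //; exists j => //.
    by apply: xb; [|exact: unit_vec_box|].
apply: bigcup_connected; first by exists ones_below => p _; left; exact: line_seg_start.
move=> p _; apply: connectedU; [|exact: line_seg_connected|exact: line_seg_connected].
by exists (unit_vec p.1.1); split; [exact: line_seg_end | exact: line_seg_start].
Qed.

End Lemma3Set.

Section Lemma3Cubes.
Variables (R : realType) (n k : nat).

Lemma int_cases (a : int) :
  [\/ a%:~R <= -1 :> R, a = 0, a = 1 | 2 <= a%:~R :> R].
Proof.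
have : (a <= -1)%R \/ a = 0 \/ a = 1 \/ (2 <= a)%R by lia.
case=> [a_le|[->|[->|a_ge]]]; [apply: Or41 | apply: Or42 | apply: Or43 | apply: Or44] => //.
  by have : a%:~R <= (-1)%:~R :> R by rewrite ler_int.
by have : (2 : int)%:~R <= a%:~R :> R by rewrite ler_int.
Qed.

Lemma unit_factor_bounds (v : int * bool) (x : R) : unit_factor v ->
  v.1%:~R <= x <= v.1%:~R + v.2%:R ->
  [/\ v = (0, false) -> x = 0, v = (1, false) -> x = 1 & 0 <= x <= 1].
Proof.
case/or3P => /eqP -> /=; rewrite ?mulr0n ?mulr1n ?mulr0z ?mulr1z => /andP[x_ge x_le];
  split=> [E|E|]; try by [case: E | lra | apply/andP; split; lra].
Qed.

Lemma factor_midpoint (v : int * bool) (x := v.1%:~R + v.2%:R / 2 : R) :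
  [/\ 0 <= x <= 1 -> unit_factor v, x = 0 -> v = (0, false) & x = 1 -> v = (1, false)].
Proof.
rewrite {}/x; case: v => a b /=.
by case: (int_cases a) => [h|->|->|h]; case: b; rewrite /= ?mulr0n ?mulr1n ?mulr0z ?mulr1z;
  split=> // H; exfalso; (try case/andP: H => ? ?); lra.
Qed.

Lemma cube_sub_lemma3_set (Q : cube n) :
  cube_real (R := R) Q `<=` lemma3_set (R := R) (n := n) k <-> Xcube k Q.
Proof.
split=> [QX | /and3P[/forallP QU /existsP[i /andP[ik /eqP Qi]] /existsP[j /eqP Qj]] x Qx].
  pose center : 'rV[R]_n := \row_m ((Q m).1%:~R + (Q m).2%:R / 2).
  have : cube_real Q center.
    by move=> m; rewrite mxE; case: (Q m).2; rewrite /= ?mulr0n ?mulr1n; apply/andP; split; lra.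
  case/QX => i /= ik [j /= ji /(boxP _ ji)[ci cj c01]].
  apply/and3P; split.
  - apply/forallP => m; have [+ _ _] := factor_midpoint (Q m); apply.
    by have := c01 m; rewrite mxE.
  - apply/existsP; exists i; rewrite ik; apply/eqP.
    by have [_ _ +] := factor_midpoint (Q i); apply; have := ci; rewrite mxE.
  - apply/existsP; exists j; apply/eqP.
    by have [_ + _] := factor_midpoint (Q j); apply; have := cj; rewrite mxE.
have ji : j != i by apply/eqP => ji; move: Qj; rewrite ji Qi.
exists i => //; exists j => //; apply/boxP => //; split.
- by have [_ + _] := unit_factor_bounds (QU i) (Qx i); apply.
- by have [+ _ _] := unit_factor_bounds (QU j) (Qx j); apply.
- by move=> m; have [_ _ +] := unit_factor_bounds (QU m) (Qx m).
Qed.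

End Lemma3Cubes.

Theorem lemma3 (R : realType) (n k : nat) :
  (2 <= n)%N -> (1 <= k)%N -> (k < n)%N -> acyclic (@lemma3_set R n k).
Proof.
move=> _ k_gt0 k_lt_n; pose e := Ordinal k_lt_n; have k_le_e : (k <= e)%N by [].
split; first exact: (lemma3_set_nonempty R k_gt0 k_le_e).
split; first exact: lemma3_set_connected k_le_e.
move=> d d_gt0; apply: homology_trivial_cycles_bound.
by apply: (cycles_boundS _ _ (cycles_bound_Xcube k_le_e d_gt0)) => Q /= /cube_sub_lemma3_set.
Qed.
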